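(* Let $(A,\mathcal{A})$, $(B,\mathcal{B})$ be measurable spaces and $j:A\times B\to\mathbb{R}$ a measurable mapping. Let $(\mathfrak{a},\mathfrak{b})$ be an $A\times B$-valued random variable. If $\sigma(j(\mathfrak{a},\mathfrak{b}),\mathfrak{a})$ is independent of $\mathfrak{b}$, then $j(\mathfrak{a},\mathfrak{b})$ is $\sigma(\mathfrak{a})$-measurable. *)

From HB Require Import structures.
From mathcomp Require Import all_boot all_order all_algebra.
From mathcomp Require Import all_classical all_reals all_analysis.
Set Implicit Arguments. Unset Strict Implicit. Unset Printing Implicit Defensive.
Import Order.TTheory GRing.Theory Num.Theory.
Local Open Scope classical_set_scope.
Local Open Scope ring_scope.

Definition sigma_of {dT} {Omega : Type} {T : measurableType dT}
  (f : Omega -> T) : set (set Omega) :=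
  [set f @^-1` U | U in [set U : set T | measurable U]].

Definition indep_sigma {d} {Omega : measurableType d} {R : realType}
  (P : probability Omega R) (G H : set (set Omega)) : Prop :=
  forall E F, G E -> H F -> P (E `&` F) = (P E * P F)%E.

Definition completion {d} {Omega : measurableType d} {R : realType}
  (P : probability Omega R) (G : set (set Omega)) : set (set Omega) :=
  [set E | exists2 F, G F & P.-negligible ((E `\` F) `|` (F `\` E))].

Definition measurable_wrt {Omega : Type} {R : realType}
  (G : set (set Omega)) (X : Omega -> R) : Prop :=
  forall U : set R, measurable U -> G (X @^-1` U).

From HB Require Import structures.
From mathcomp Require Import all_boot all_order all_algebra.
From mathcomp Require Import all_classical all_reals all_analysis.
From mathcomp Require Import measurable_realfun.
Import Order.TTheory GRing.Theory Num.Theory.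
Local Open Scope classical_set_scope.
Local Open Scope ring_scope.

(* Fix a Borel set U, put X := j(a, b) and g x := P(j(x, b) \in U).  Since
   (X, a) is independent of b, the law of ((X, a), b) is the product of the
   marginals, so b can be integrated out with (X, a) frozen:
   P(X \in S, X \in U) = E[1_{X \in S} g(a)] for every Borel S.  Taking S = R
   and S = U gives P(E) = E[g(a)] = E[1_E g(a)] for E := {X \in U}; as
   0 <= g <= 1 this forces 1_E = g(a) almost surely, so E differs from the
   sigma(a)-measurable set {g(a) = 1} by a null set. *)

Section negligible_from_integrals.
Local Open Scope ereal_scope.
Context {d} {T : measurableType d} {R : realType}.
Variable mu : {measure set T -> \bar R}.

Lemma ge0_integral_eq0_negligible {f : T -> \bar R} :
  measurable_fun [set: T] f -> (forall x, 0 <= f x) ->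
  \int[mu]_x f x = 0 -> mu.-negligible [set x | f x != 0].
Proof.
move=> mf f0 If.
have [N [mN N0 sN]] : ae_eq mu setT f (cst 0).
  apply/ae_eq_integral_abs => //.
  by rewrite -If; apply: eq_integral => x _; rewrite gee0_abs.
exists N; split => // x /= fx; apply: sN => /= /(_ I) fx0.
by rewrite fx0 eqxx in fx.
Qed.

Lemma ge0_le_integral_eq_negligible {f g : T -> \bar R} :
  measurable_fun [set: T] f -> measurable_fun [set: T] g ->
  (forall x, 0 <= g x <= f x) -> (forall x, g x \is a fin_num) ->
  \int[mu]_x g x \is a fin_num -> \int[mu]_x f x = \int[mu]_x g x ->
  mu.-negligible [set x | f x != g x].
Proof.
move=> mf mg gf gfin Igfin Ifg.
have g0 x : 0 <= g x by case/andP: (gf x).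
have fg0 x : 0 <= f x - g x by rewrite sube_ge0 ?gfin //; case/andP: (gf x).
suff Ifg0 : \int[mu]_x (f x - g x) = 0.
  have mfg : measurable_fun [set: T] (fun x => f x - g x).
    exact: emeasurable_funB.
  apply: (negligibleS _ (ge0_integral_eq0_negligible mfg fg0 Ifg0)).
  move=> x /= fgx; apply/eqP => fgx0; move/eqP: fgx; apply.
  by rewrite -[f x](subeK (f x) (gfin x)) fgx0 add0e.
have : \int[mu]_x (f x - g x) + \int[mu]_x g x = \int[mu]_x g x.
  rewrite -ge0_integralD //; last exact: emeasurable_funB.
  by rewrite -Ifg; apply: eq_integral => x _; rewrite subeK ?gfin.
by move/(congr1 (fun t => t - \int[mu]_x g x)); rewrite addeK // subee.
Qed.

End negligible_from_integrals.

Section indicator_from_integrals.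
Local Open Scope ereal_scope.
Context {d} {T : measurableType d} {R : realType}.
Variable mu : {finite_measure set T -> \bar R}.

Lemma indic_integral_negligible_symdiff (E : set T) (h : T -> \bar R) :
  measurable E -> measurable_fun [set: T] h -> (forall x, 0 <= h x <= 1) ->
  mu E = \int[mu]_x h x -> mu E = \int[mu]_x ((\1_E x)%:E * h x) ->
  mu.-negligible ((E `\` h @^-1` [set 1]) `|` (h @^-1` [set 1] `\` E)).
Proof.
move=> mE mh h01 Eh EEh.
pose k x := (\1_E x)%:E * h x.
have kE x : k x = if x \in E then h x else 0.
  by rewrite /k indicE; case: ifP; rewrite ?mul1e ?mul0e.
have h0 x : 0 <= h x by case/andP: (h01 x).
have hfin x : h x \is a fin_num.
  by rewrite ge0_fin_numE // (le_lt_trans _ (ltry 1)) //; case/andP: (h01 x).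
have mind : measurable_fun [set: T] (fun x => (\1_E x)%:E : \bar R).
  by apply/measurable_EFinP; exact: measurable_indic.
have mk : measurable_fun [set: T] k := emeasurable_funM mind mh.
have kfin x : k x \is a fin_num by rewrite kE; case: ifP => _; rewrite ?hfin.
have Ikfin : \int[mu]_x k x \is a fin_num by rewrite -EEh fin_num_measure.
have IE : \int[mu]_x (\1_E x)%:E = \int[mu]_x k x.
  by rewrite integral_indic // setIT.
have Ih : \int[mu]_x h x = \int[mu]_x k x by rewrite -Eh.
have NE := ge0_le_integral_eq_negligible mu mind mk _ kfin Ikfin IE.
have Nh := ge0_le_integral_eq_negligible mu mh mk _ kfin Ikfin Ih.
apply: (negligibleS _ (negligibleU (NE _) (Nh _))).
- move=> x [[Ex hx1]|[hx1 Ex]] /=.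
    left; rewrite kE indicE mem_set //.
    by apply/eqP => h1; apply: hx1; rewrite /= -h1.
  by right; rewrite kE memNset // hx1.
- by move=> x; rewrite kE indicE; case: (x \in E); rewrite ?mulr1n ?h01 ?lexx.
- by move=> x; rewrite kE; case: (x \in E); rewrite ?h0 ?lexx.
Qed.

End indicator_from_integrals.

Section independent_pair.
Local Open Scope ereal_scope.
Context {d dT1 dT2} {Omega : measurableType d} {T1 : measurableType dT1}
  {T2 : measurableType dT2} {R : realType}.
Context (P : probability Omega R) {Y : Omega -> T1} {Z : Omega -> T2}.
Hypotheses (mY : measurable_fun [set: Omega] Y)
  (mZ : measurable_fun [set: Omega] Z).

Let Ym : {mfun Omega >-> T1} := HB.pack Y (isMeasurableFun.Build _ _ _ _ _ mY).
Let Zm : {mfun Omega >-> T2} := HB.pack Z (isMeasurableFun.Build _ _ _ _ _ mZ).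
Let YZm : {mfun Omega >-> (T1 * T2)%type} := HB.pack (fun w => (Y w, Z w))
  (isMeasurableFun.Build _ _ _ _ _ (measurable_fun_pair mY mZ)).

Lemma measurable_fun_prob_preimage_xsection D : measurable D ->
  measurable_fun [set: T1] (fun x => P (Z @^-1` xsection D x)).
Proof. exact: (measurable_fun_xsection (distribution P Zm)). Qed.

Hypothesis YZ_indep : indep_sigma P (sigma_of Y) (sigma_of Z).

Lemma joint_distribution_indep D : measurable D ->
  (distribution P Ym \x distribution P Zm) D = P ((fun w => (Y w, Z w)) @^-1` D).
Proof.
apply: (product_measure_unique (m' := distribution P YZm)) => S T mS mT.
by apply: YZ_indep; [exists S | exists T].
Qed.

Lemma prob_preimage_pair_indep D : measurable D ->
  P ((fun w => (Y w, Z w)) @^-1` D) = \int[P]_w P (Z @^-1` xsection D (Y w)).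
Proof.
move=> mD; rewrite -joint_distribution_indep // /product_measure1.
rewrite ge0_integral_pushforward //.
exact: measurable_fun_xsection.
Qed.

End independent_pair.

Section frozen_probability.
Local Open Scope ereal_scope.
Context {R : realType} {d} {Omega : measurableType d} (P : probability Omega R)
  {dA dB} {A : measurableType dA} {B : measurableType dB}
  {j : A * B -> R} {a : Omega -> A} {b : Omega -> B}.
Hypotheses (mj : measurable_fun [set: A * B] j)
  (mab : measurable_fun [set: Omega] (fun w => (a w, b w))).
Hypothesis indep :
  indep_sigma P (sigma_of (fun w => (j (a w, b w), a w))) (sigma_of b).
Context {U : set R} (mU : measurable U).

Let X w := j (a w, b w).
Let C := j @^-1` U.

Let ma : measurable_fun [set: Omega] a :=
  measurableT_comp (@measurable_fst _ _ A B) mab.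
Let mb : measurable_fun [set: Omega] b :=
  measurableT_comp (@measurable_snd _ _ A B) mab.
Let mX : measurable_fun [set: Omega] X := measurableT_comp mj mab.

Let mC : measurable C.
Proof. by rewrite -[C]setTI; apply: mj. Qed.

Lemma measurable_frozen_prob :
  measurable_fun [set: A] (fun x => P (b @^-1` xsection C x)).
Proof. exact: (measurable_fun_prob_preimage_xsection P mb _ mC). Qed.

Lemma frozen_prob_ge0_le1 x : 0 <= P (b @^-1` xsection C x) <= 1.
Proof.
rewrite measure_ge0 probability_le1 //= -[Z in measurable Z]setTI.
exact/mb/measurable_xsection.
Qed.

Lemma prob_preimage_setI_frozen S : measurable S ->
  P (X @^-1` S `&` X @^-1` U) =
  \int[P]_w ((\1_(X @^-1` S) w)%:E * P (b @^-1` xsection C (a w))).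
Proof.
move=> mS; pose D := [set p : (R * A) * B | S p.1.1 /\ C (p.1.2, p.2)].
have mD : measurable D.
  have mp : measurable_fun [set: (R * A) * B] (fun p => (p.1.2, p.2)).
    exact: measurable_fun_pair (measurableT_comp measurable_snd measurable_fst)
      measurable_snd.
  apply: measurableI; rewrite -[Z in measurable Z]setTI.
    exact: (measurableT_comp measurable_fst measurable_fst).
  exact: mp.
rewrite [LHS](prob_preimage_pair_indep P (measurable_fun_pair mX ma) mb indep _ mD).
apply: eq_integral => w _; rewrite indicE.
have [Sw|nSw] := pselect (S (X w)).
  rewrite mem_set // mul1e; congr (P _).
  apply/seteqP; split => y; rewrite /xsection /D /= !inE; first by case.
  by move=> ?; split.
rewrite memNset // mul0e.
have -> : xsection D (X w, a w) = set0.
  by apply/seteqP; split => y //; rewrite /xsection /D /= inE => -[].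
by rewrite preimage_set0 measure0.
Qed.

Lemma prob_preimage_frozen :
  P (X @^-1` U) = \int[P]_w P (b @^-1` xsection C (a w)).
Proof.
rewrite -[X @^-1` U]setTI -(preimage_setT X) prob_preimage_setI_frozen //.
by apply: eq_integral => w _; rewrite indicT mul1e.
Qed.

Lemma prob_preimage_indic_frozen : P (X @^-1` U) =
  \int[P]_w ((\1_(X @^-1` U) w)%:E * P (b @^-1` xsection C (a w))).
Proof. by rewrite -prob_preimage_setI_frozen // setIid. Qed.

End frozen_probability.

Theorem lemma6p1 (R : realType) (d : measure_display) (Omega : measurableType d)
  (P : probability Omega R)
  (dA dB : measure_display) (A : measurableType dA) (B : measurableType dB)
  (j : A * B -> R) (a : Omega -> A) (b : Omega -> B) :
  measurable_fun setT j ->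
  measurable_fun setT (fun w => (a w, b w)) ->
  indep_sigma P (sigma_of (fun w => (j (a w, b w), a w))) (sigma_of b) ->
  measurable_wrt (completion P (sigma_of a)) (fun w => j (a w, b w)).
Proof.
move=> mj mab indep U mU.
pose g x := P (b @^-1` xsection (j @^-1` U) x).
have mg : measurable_fun [set: A] g := measurable_frozen_prob P mj mab mU.
exists (a @^-1` (g @^-1` [set 1%E])).
  exists (g @^-1` [set 1%E]) => //.
  by rewrite /= -[Z in measurable Z]setTI; exact/mg/emeasurable_set1.
apply: indic_integral_negligible_symdiff.
- by rewrite -[Z in measurable Z]setTI; exact: (measurableT_comp mj mab).
- exact: (measurableT_comp mg (measurableT_comp measurable_fst mab)).
- move=> w; exact (frozen_prob_ge0_le1 P mj mab mU (a w)).
- exact (prob_preimage_frozen P mj mab indep mU).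
- exact (prob_preimage_indic_frozen P mj mab indep mU).
Qed.
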